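(* Let $G$ be a finite graph with a proper edge-coloring, and let $\delta(G)$ denote its minimum degree. If $|V(G)|\ge 2\delta(G)$, then $G$ has a rainbow matching of size at least $\delta(G)-2(\delta(G))^{2/3}$.
   Context: An edge-coloring is proper if no two edges sharing an endpoint receive the same color (so each color class is a matching). A matching is rainbow if all of its edges have distinct colors. $\delta(G)$ is the minimum vertex degree of $G$. *)

From HB Require Import structures.
From mathcomp Require Import all_boot all_order all_algebra.
From mathcomp Require Import reals exp.
Set Implicit Arguments. Unset Strict Implicit. Unset Printing Implicit Defensive.

(* A finite simple graph: vertex set T : finType, adjacency e : rel T that is
   symmetric and irreflexive (assumed as hypotheses in the theorem). *)

Definition deg (T : finType) (e : rel T) (x : T) : nat := #|[set y | e x y]|.

(* minimum degree delta(G); the seed #|T| exceeds every degree, so for a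
   nonempty vertex set this is exactly the minimum of the degrees
   (for the empty graph it is 0). *)
Definition mindeg (T : finType) (e : rel T) : nat :=
  \big[minn/#|T|]_(x : T) deg e x.

Definition proper_edge_coloring (T : finType) (e : rel T) (K : eqType)
    (c : T -> T -> K) : Prop :=
  (forall x y, e x y -> c x y = c y x) /\
  (forall x y z, e x y -> e x z -> y != z -> c x y != c x z).

(* A matching, given as a list of edges (x, y) whose endpoints are all
   pairwise distinct (so the edges are pairwise vertex-disjoint and distinct);
   its size is the length of the list. *)
Definition is_matching (T : finType) (e : rel T) (M : seq (T * T)) : Prop :=
  all (fun p => e p.1 p.2) M /\ uniq (flatten [seq [:: p.1; p.2] | p <- M]).

Definition rainbow_matching (T : finType) (e : rel T) (K : eqType)
    (c : T -> T -> K) (M : seq (T * T)) : Prop :=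
  is_matching e M /\ uniq [seq c p.1 p.2 | p <- M].

From HB Require Import structures.
From mathcomp Require Import all_boot all_order all_algebra.
From mathcomp Require Import reals exp.
From mathcomp Require Import zify.
Set Implicit Arguments. Unset Strict Implicit. Unset Printing Implicit Defensive.

(* Let M be a maximum rainbow matching, k = |M|, s = delta - k, and suppose
   8 delta^2 < s^3 (which is what k < delta - 2 delta^(2/3) means).  The edges of M are promoted in L = floor
   (sqrt s) rounds: an edge is promoted in round j when one of its ends, its
   heavy end, has at least 4L - 2j - 1 options.  Repeatedly deleting a
   promoted edge and reattaching its heavy end to a fresh option (the level
   of any edge displaced by a colour clash is smaller, so this terminates)
   rearranges M so as to avoid two given uncovered vertices and two given
   free colours.  Maximality of M then forbids options at uncovered vertices
   and at the other ends of promoted edges, and forbids an unpromoted edge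
   with three options at one end and one at the other.  Hence, counting in
   round j the pairs (u, x) with u an option of an end x of an unpromoted
   edge, every uncovered u occurs in at least s pairs, every edge promoted in
   round j in at most |U| and every other unpromoted edge in at most
   4L - 2j - 2.  Summing over the rounds gives
   |U| L s <= |U| k + k (3L^2 - L), which contradicts |U| >= 2s and
   8 (k + s)^2 < s^3. *)

Section RainbowSets.
Variables (T : finType) (e : rel T) (K : eqType) (c : T -> T -> K).
Implicit Types (S A : {set T * T}) (p q : T * T) (x : T) (g : K).

Definition ecolor p := c p.1 p.2.
Definition incident x p := (x == p.1) || (x == p.2).
Definition covered S := [set x | [exists p in S, incident x p]].
Definition has_color S g := [exists p in S, ecolor p == g].

(* Rainbow matchings are handled as sets of oriented edges. *)
Definition rainbow S :=
  [forall p in S, e p.1 p.2] &&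
  [forall p in S, forall q in S, (p != q) ==>
     [&& ~~ incident p.1 q, ~~ incident p.2 q & ecolor p != ecolor q]].

Lemma incident1 p : incident p.1 p. Proof. by rewrite /incident eqxx. Qed.
Lemma incident2 p : incident p.2 p. Proof. by rewrite /incident eqxx orbT. Qed.

Lemma coveredP S x : reflect (exists2 p, p \in S & incident x p) (x \in covered S).
Proof. by rewrite inE; apply: (iffP exists_inP). Qed.

Lemma has_colorP S g : reflect (exists2 p, p \in S & ecolor p = g) (has_color S g).
Proof. by apply: (iffP exists_inP) => -[p pS /eqP pg]; exists p; rewrite ?pg. Qed.

Lemma covered_incident S p x : p \in S -> incident x p -> x \in covered S.
Proof. by move=> pS px; apply/coveredP; exists p. Qed.

Lemma covered_subset A S : A \subset S -> covered A \subset covered S.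
Proof.
by move/subsetP=> AS; apply/subsetP => x /coveredP[p /AS pS px]; apply/coveredP; exists p.
Qed.

Lemma has_color_subset A S g : A \subset S -> has_color A g -> has_color S g.
Proof. by move/subsetP=> AS /has_colorP[p /AS pS pg]; apply/has_colorP; exists p. Qed.

Lemma coveredU1 p S x : (x \in covered (p |: S)) = incident x p || (x \in covered S).
Proof.
apply/coveredP/orP => [[q]|[px|/coveredP[q qS qx]]].
- by rewrite in_setU1 => /orP[/eqP-> ->|qS qx]; [left|right; apply/coveredP; exists q].
- by exists p; rewrite ?setU11.
- by exists q; rewrite // in_setU1 qS orbT.
Qed.

Lemma has_colorU1 p S g : has_color (p |: S) g = (ecolor p == g) || has_color S g.
Proof.
apply/has_colorP/orP => [[q]|[/eqP pg|/has_colorP[q qS qg]]].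
- by rewrite in_setU1 => /orP[/eqP-> ->|qS qg]; [left|right; apply/has_colorP; exists q].
- by exists p; rewrite ?setU11.
- by exists q; rewrite // in_setU1 qS orbT.
Qed.

Lemma notin_covered S p : p.1 \notin covered S -> p \notin S.
Proof. by apply: contra => pS; apply: covered_incident pS (incident1 p). Qed.

Lemma has_colorE S g : has_color S g = (g \in [seq ecolor p | p <- enum S]).
Proof.
apply/has_colorP/mapP => [[p pS <-]|[p]]; first by exists p; rewrite ?mem_enum.
by rewrite mem_enum => pS ->; exists p.
Qed.

Lemma rainbow0 : rainbow set0.
Proof. by apply/andP; split; apply/forall_inP => p; rewrite in_set0. Qed.

Section Rainbow.
Variable S : {set T * T}.
Hypothesis rbS : rainbow S.

Lemma rainbow_edge p : p \in S -> e p.1 p.2.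
Proof. by case/andP: rbS => /forall_inP H _ /H. Qed.

Lemma rainbow_apart p q : p \in S -> q \in S -> p != q ->
  [&& ~~ incident p.1 q, ~~ incident p.2 q & ecolor p != ecolor q].
Proof.
case/andP: rbS => _ /forall_inP H pS qS; apply/implyP.
by move/forall_inP: (H p pS); apply.
Qed.

Lemma rainbow_color_inj p q : p \in S -> q \in S -> ecolor p = ecolor q -> p = q.
Proof.
move=> pS qS pq; apply/eqP; apply: contraTT isT => /(rainbow_apart pS qS).
by rewrite pq eqxx !andbF.
Qed.

Lemma rainbow_incident_inj p q x : p \in S -> q \in S ->
  incident x p -> incident x q -> p = q.
Proof.
move=> pS qS px qx; apply/eqP; apply: contraTT isT => /(rainbow_apart pS qS).
by case/orP: px => /eqP <-; rewrite qx ?andbF.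
Qed.

Lemma rainbow_subset A : A \subset S -> rainbow A.
Proof.
move/subsetP=> AS; apply/andP; split.
  by apply/forall_inP => p /AS; apply: rainbow_edge.
apply/forall_inP => p pA; apply/forall_inP => q qA; apply/implyP.
exact: rainbow_apart (AS _ pA) (AS _ qA).
Qed.

Lemma rainbowU1 p : e p.1 p.2 -> p.1 \notin covered S -> p.2 \notin covered S ->
  ~~ has_color S (ecolor p) -> rainbow (p |: S).
Proof.
move=> ep p1 p2 pc; apply/andP; split.
  by apply/forall_inP => q; rewrite in_setU1 => /orP[/eqP->|/rainbow_edge].
have away q x : q \in S -> x \notin covered S -> ~~ incident x q.
  by move=> qS; apply: contra => /(covered_incident qS).
have other q : q \in S -> [&& ~~ incident p.1 q, ~~ incident p.2 q & ecolor p != ecolor q].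
  move=> qS; rewrite !away //=; apply: contraNneq pc => ->.
  by apply/has_colorP; exists q.
have sym q : q \in S -> [&& ~~ incident q.1 p, ~~ incident q.2 p & ecolor q != ecolor p].
  move=> qS; have /and3P[_ _ qc] := other q qS.
  have apart x : x \in covered S -> (x == p.1) = false /\ (x == p.2) = false.
    by move=> xS; split; [apply: contraNF p1 | apply: contraNF p2] => /eqP <-.
  rewrite /incident [ecolor q == _]eq_sym qc.
  have [-> ->] := apart _ (covered_incident qS (incident1 q)).
  by have [-> ->] := apart _ (covered_incident qS (incident2 q)).
apply/forall_inP => q; rewrite in_setU1 => /orP[/eqP->|qS];
  apply/forall_inP => r; rewrite in_setU1 => /orP[/eqP->|rS]; apply/implyP => //.
- by rewrite eqxx.
- by move=> _; apply: other.
- by move=> _; apply: sym.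
- exact: rainbow_apart.
Qed.


Lemma covered_ends : covered S = [set p.1 | p in S] :|: [set p.2 | p in S].
Proof.
apply/setP => x; apply/coveredP/setUP => [[p pS /orP[]/eqP->]|[]/imsetP[p pS ->]].
- by left; apply/imsetP; exists p.
- by right; apply/imsetP; exists p.
- by exists p => //; apply: incident1.
- by exists p => //; apply: incident2.
Qed.

Lemma rainbow_fst_inj : {in S &, injective (fun p : T * T => p.1)}.
Proof.
move=> p q pS qS pq; apply: rainbow_incident_inj pS qS (incident1 p) _.
by rewrite /incident pq eqxx.
Qed.

Lemma rainbow_snd_inj : {in S &, injective (fun p : T * T => p.2)}.
Proof.
move=> p q pS qS pq; apply: rainbow_incident_inj pS qS (incident2 p) _.
by rewrite /incident pq eqxx orbT.
Qed.

Hypothesis e_irr : irreflexive e.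

Lemma rainbow_ends_disjoint : [disjoint [set p.1 | p in S] & [set p.2 | p in S]].
Proof.
rewrite -setI_eq0; apply/eqP/setP => x; rewrite !inE; apply/negP.
case/andP => /imsetP[p pS ->] /imsetP[q qS pq].
have pq' : p = q.
  by apply: rainbow_incident_inj pS qS (incident1 p) _; rewrite /incident pq eqxx orbT.
by move: (rainbow_edge pS); rewrite pq pq' e_irr.
Qed.

Lemma card_covered : #|covered S| = 2 * #|S|.
Proof.
have := rainbow_ends_disjoint; rewrite -setI_eq0 => /eqP disj.
rewrite covered_ends cardsU disj cards0 subn0.
by rewrite !card_in_imset ?addnn ?mul2n //; [apply: rainbow_snd_inj | apply: rainbow_fst_inj].
Qed.

Lemma sum_covered (g : T -> nat) :
  \sum_(x in covered S) g x = \sum_(p in S) (g p.1 + g p.2).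
Proof.
rewrite big_split /= (eq_bigl [predU [set p.1 | p in S] & [set p.2 | p in S]]); last first.
  by move=> x; rewrite covered_ends !inE.
rewrite bigU ?rainbow_ends_disjoint // !big_imset //.
  exact: rainbow_snd_inj.
exact: rainbow_fst_inj.
Qed.

End Rainbow.

Lemma rainbow_extend S u w : rainbow S -> e u w ->
  u \notin covered S -> w \notin covered S -> ~~ has_color S (c u w) ->
  exists2 S', rainbow S' & #|S'| = #|S|.+1.
Proof.
move=> rbS uw uS wS cS; exists ((u, w) |: S); first exact: rainbowU1.
by rewrite cardsU1 (notin_covered (p := (u, w)) uS).
Qed.

(* Replacing the edge [q = xy] by [ux] and [vy]. *)
Lemma rainbow_extend_split S q x y u v : rainbow S -> q \in S ->
  incident x q -> incident y q -> x != y -> e u x -> e v y -> u != v ->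
  u \notin covered S -> v \notin covered S -> c u x != c v y ->
  ~~ has_color S (c u x) -> ~~ has_color S (c v y) ->
  exists2 S', rainbow S' & #|S'| = #|S|.+1.
Proof.
move=> rbS qS xq yq xy ux vy uv uS vS cuv cu cv.
pose S0 := S :\ q.
have rbS0 : rainbow S0 := rainbow_subset rbS (subD1set S q).
have off_q z : incident z q -> z \notin covered S0.
  move=> zq; apply/coveredP => -[p]; rewrite in_setD1 => /andP[pq pS] zp.
  by move: pq; rewrite (rainbow_incident_inj rbS pS qS zp zq) eqxx.
have off_S z : z \notin covered S -> z \notin covered S0.
  by apply: contra; apply: (subsetP (covered_subset (subD1set S q))).
have col_S0 g : ~~ has_color S g -> ~~ has_color S0 g.
  by apply: contra; apply: has_color_subset (subD1set S q).
have uS1 : u \notin covered ((v, y) |: S0).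
  rewrite coveredU1 /incident /= !negb_or uv off_S //= andbT.
  by apply: contraNneq uS => ->; apply: covered_incident qS yq.
have xS1 : x \notin covered ((v, y) |: S0).
  rewrite coveredU1 /incident /= !negb_or xy off_q // !andbT.
  by apply: contraNneq vS => <-; apply: covered_incident qS xq.
have rbS1 : rainbow ((v, y) |: S0).
  by apply: rainbowU1 => //=; [exact: off_S | exact: off_q | exact: col_S0].
exists ((u, x) |: ((v, y) |: S0)).
  by apply: rainbowU1 => //=; rewrite has_colorU1 negb_or /ecolor /= eq_sym cuv col_S0.
rewrite cardsU1 (notin_covered (p := (u, x)) uS1).
by rewrite cardsU1 (notin_covered (p := (v, y)) (off_S _ vS)) (cardsD1 q S) qS.
Qed.

End RainbowSets.

Lemma card_in_set_sum (X : finType) (A : {set X}) (P : pred X) :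
  #|[set x in A | P x]| = \sum_(x in A) P x.
Proof.
rewrite -sum1_card (eq_bigl (fun x => (x \in A) && P x)) => [|x]; last by rewrite inE.
by rewrite big_mkcondr /=; apply: eq_bigr => x _; case: (P x).
Qed.

Section ProperColoring.
Variables (T : finType) (e : rel T) (K : eqType) (c : T -> T -> K).
Hypothesis e_sym : symmetric e.
Hypothesis c_sym : forall x y, e x y -> c x y = c y x.
Hypothesis c_proper : forall x y z, e x y -> e x z -> y != z -> c x y != c x z.

Lemma card_nbrs_colored (O : {set T}) x (Y : seq K) :
  (forall z, z \in O -> e x z) -> #|[set z in O | c x z \in Y]| <= size Y.
Proof.
move=> Ox; rewrite cardE -(size_map (c x)); apply: uniq_leq_size.
  rewrite map_inj_in_uniq ?enum_uniq // => z w; rewrite !mem_enum !inE.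
  move=> /andP[/Ox xz _] /andP[/Ox xw _]; apply: contra_eq => zw.
  exact: c_proper.
by move=> g /mapP[z]; rewrite mem_enum inE => /andP[_ ?] ->.
Qed.

Lemma card_nbrs_colored_sym (O : {set T}) x (Y : seq K) :
  (forall z, z \in O -> e z x) -> #|[set z in O | c z x \in Y]| <= size Y.
Proof.
move=> Ox; have Ox' z : z \in O -> e x z by move/Ox; rewrite e_sym.
rewrite -(eq_card (A := [set z in O | c x z \in Y])) ?card_nbrs_colored // => z.
by rewrite !inE; case: (boolP (z \in O)) => //= /Ox /c_sym ->.
Qed.

End ProperColoring.

Section MaximumRainbowMatching.
Variables (T : finType) (e : rel T) (K : eqType) (c : T -> T -> K).
Hypothesis e_sym : symmetric e.
Hypothesis e_irr : irreflexive e.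
Hypothesis c_sym : forall x y, e x y -> c x y = c y x.
Hypothesis c_proper : forall x y z, e x y -> e x z -> y != z -> c x y != c x z.
Variable M : {set T * T}.
Hypothesis rbM : rainbow e c M.
Hypothesis maxM : forall S, rainbow e c S -> #|S| <= #|M|.
Variable L : nat.
Hypothesis L_ge2 : 2 <= L.

Local Notation ecolor := (ecolor c).
Local Notation has_color := (has_color c).
Local Notation rainbow := (rainbow e c).
Implicit Types (S P Q : {set T * T}) (p q : T * T) (x u z : T) (g : K).

Definition uncovered := ~: covered M.

Definition options P x :=
  [set u in uncovered | e u x & ~~ has_color (M :\: P) (c u x)].

(* Chosen so that [rematch] can avoid two vertices and two colours on top of
   the budget [2 j] of new edges in [exchange]. *)
Definition threshold j := 4 * L - 2 * j - 1.

Definition heavy j P p :=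
  (threshold j <= #|options P p.1|) || (threshold j <= #|options P p.2|).

Fixpoint promoted j :=
  if j is j'.+1 then
    promoted j' :|: [set p in M :\: promoted j' | heavy j' (promoted j') p]
  else set0.

(* For [p \in promoted L], the round [i < L] at which [p] was promoted. *)
Definition level p := count (fun i => p \notin promoted i.+1) (iota 0 L).

Definition potential P := \sum_(p in P) (level p).+1.

Lemma promoted_sub j : promoted j \subset M.
Proof.
elim: j => [|j IH] /=; first exact: sub0set.
by rewrite subUset IH; apply/subsetP => p; rewrite !inE => /andP[/andP[]].
Qed.

Lemma promoted_mono i j : i <= j -> promoted i \subset promoted j.
Proof.
move/subnK <-; elim: (j - i) => [|k IH] //=.
exact: subset_trans IH (subsetUl _ _).
Qed.

Lemma promoted_round j p : p \in promoted j ->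
  exists2 i, i < j & (p \notin promoted i) && (p \in promoted i.+1).
Proof.
elim: j => [|j IH] /=; first by rewrite in_set0.
case: (boolP (p \in promoted j)) => [/IH[i ij pi] _|pj pj1]; last by exists j; rewrite ?pj.
by exists i => //; apply: ltnW.
Qed.

Lemma promoted_heavy j p : p \notin promoted j -> p \in promoted j.+1 ->
  p \in M /\ heavy j (promoted j) p.
Proof. by move=> pj /=; rewrite in_setU (negbTE pj) !inE => /andP[/andP[]]. Qed.

Lemma levelE i p : i < L -> p \notin promoted i -> p \in promoted i.+1 -> level p = i.
Proof.
move=> iL pi pi1; rewrite /level -(subnKC (ltnW iL)) iotaD count_cat add0n.
rewrite (@eq_in_count _ _ predT) => [|j]; last first.
  rewrite mem_iota add0n => /andP[_ ji] /=.
  apply: contra pi; exact: (subsetP (promoted_mono ji)).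
rewrite count_predT size_iota (@eq_in_count _ _ pred0) => [|j]; last first.
  rewrite mem_iota => /andP[ij _] /=.
  by rewrite (subsetP (promoted_mono (ij : i < j.+1))).
by rewrite count_pred0 addn0.
Qed.

Lemma level_lt j p : j <= L -> p \in promoted j -> level p < j.
Proof.
by move=> jL /promoted_round[i ij /andP[pi pi1]]; rewrite (levelE _ pi pi1) ?(leq_trans ij).
Qed.

Lemma promoted_level p : p \in promoted L ->
  p \notin promoted (level p) /\ p \in promoted (level p).+1.
Proof. by case/promoted_round => i iL /andP[pi pi1]; rewrite (levelE iL pi pi1). Qed.

Definition heavy_end p :=
  if threshold (level p) <= #|options (promoted (level p)) p.1| then p.1 else p.2.
Definition other_end p :=
  if threshold (level p) <= #|options (promoted (level p)) p.1| then p.2 else p.1.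

Lemma heavy_end_options p : p \in promoted L ->
  threshold (level p) <= #|options (promoted (level p)) (heavy_end p)|.
Proof.
case/promoted_level => pi pi1; have [_ /orP heavy_p] := promoted_heavy pi pi1.
by rewrite /heavy_end; case: ifP => // /negbT; case: heavy_p => [->|].
Qed.

Lemma incident_heavy_end p : incident (heavy_end p) p.
Proof. by rewrite /heavy_end; case: ifP => _; [apply: incident1 | apply: incident2]. Qed.

Lemma incident_other_end p : incident (other_end p) p.
Proof. by rewrite /other_end; case: ifP => _; [apply: incident2 | apply: incident1]. Qed.

Lemma incident_ends p x : incident x p -> x = heavy_end p \/ x = other_end p.
Proof. by rewrite /heavy_end /other_end /incident; case: ifP => _ /orP[]/eqP->; auto. Qed.

Lemma heavy_end_neq_other_end p : p \in M -> heavy_end p != other_end p.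
Proof.
move/(rainbow_edge rbM); rewrite /heavy_end /other_end.
by case: ifP => _; apply: contraTneq => ->; rewrite e_irr.
Qed.

Lemma optionsP P x u : reflect
  [/\ u \notin covered M, e u x & ~~ has_color (M :\: P) (c u x)] (u \in options P x).
Proof. by rewrite !inE; apply: (iffP and3P). Qed.

Lemma heavy_end_covered p : p \in M -> heavy_end p \in covered M.
Proof. by move=> pM; apply: covered_incident pM (incident_heavy_end p). Qed.

(* A matching [N] under construction from [M]: the edges of [P] have been
   deleted and still await a replacement, every other deleted edge has been
   replaced by a new edge joining an uncovered vertex to one of its ends, and
   [B] bounds the number of new edges plus the remaining work. *)
Record exchange_state (X : {set T}) (Y : seq K) (j B : nat) (N P : {set T * T}) :
    Prop := ExchangeState {
  st_rainbow : rainbow N;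
  st_card : #|N| + #|P| = #|M|;
  st_pending : P \subset promoted j;
  st_pending_out : [disjoint P & N];
  st_new_edges : forall p, p \in N :\: M ->
    p.1 \in uncovered /\ p.2 \in covered (M :\: (N :|: P));
  st_removed : M :\: N \subset promoted j;
  st_avoid_vertices : [disjoint X & covered N];
  st_avoid_colors : forall g, g \in Y -> ~~ has_color N g;
  st_budget : #|N :\: M| + potential P <= B;
  st_heavy_ends : forall p, p \in P -> heavy_end p \notin X }.

Section ExchangeStep.
Variables (X : {set T}) (Y : seq K) (j B : nat) (N P : {set T * T}) (x0 : T * T).
Hypothesis jL : j <= L.
Hypothesis st : exchange_state X Y j B N P.
Hypothesis x0P : x0 \in P.

Let i := level x0.
Let h := heavy_end x0.

Lemma pending_in_M : P \subset M.
Proof. exact: subset_trans (st_pending st) (promoted_sub j). Qed.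

Let x0M : x0 \in M. Proof. exact: subsetP pending_in_M _ x0P. Qed.
Let x0N : x0 \notin N. Proof. by rewrite (disjointFr (st_pending_out st) x0P). Qed.
Let x0j : x0 \in promoted j. Proof. exact: subsetP (st_pending st) _ x0P. Qed.
Let ij : i < j. Proof. exact: level_lt jL x0j. Qed.

Lemma pending_heavy_end_free : h \notin covered N.
Proof.
apply/coveredP => -[p pN hp].
case: (boolP (p \in M)) => pM.
  by move: x0N; rewrite -(rainbow_incident_inj rbM pM x0M hp (incident_heavy_end x0)) pN.
have pNM : p \in N :\: M by rewrite inE pM.
have [p1U /coveredP[q]] := st_new_edges st pNM.
rewrite !inE negb_or => /andP[/andP[_ qP] qM] qp2.
case/orP: hp => /eqP hp.
  by move: p1U; rewrite -hp inE heavy_end_covered.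
have hq : incident h q by rewrite hp.
by move: qP; rewrite (rainbow_incident_inj rbM qM x0M hq (incident_heavy_end x0)) x0P.
Qed.

(* An option of [h] fails only if it lies in [X] or is covered by [N], or if its
   colour is in [Y] or on a new edge; the budget leaves fewer such options than
   [threshold i]. *)
Lemma exchange_candidate :
  (forall i, i < L -> #|X| + size Y + 2 * (B - i.+1) < threshold i) ->
  exists u, [/\ u \in options (promoted i) h, u \notin X, u \notin covered N,
              c u h \notin Y & ~~ has_color (N :\: M) (c u h)].
Proof.
move=> room; set O := options (promoted i) h.
have Oh u : u \in O -> e u h by case/optionsP.
pose b1 := [set u in O | u \in X].
pose b2 := [set u in O | u \in covered N].
pose b3 := [set u in O | c u h \in Y].
pose b4 := [set u in O | c u h \in [seq ecolor p | p <- enum (N :\: M)]].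
have c1 : #|b1| <= #|X| by apply: subset_leq_card; apply/subsetP => u; rewrite inE => /andP[].
have c2 : #|b2| <= #|N :\: M|.
  apply: leq_trans (leq_imset_card (fun p : T * T => p.1) _); apply: subset_leq_card.
  apply/subsetP => u; rewrite inE => /andP[/optionsP[uM _ _] /coveredP[p pN up]].
  have pM : p \notin M by apply: contra uM => pM; apply: covered_incident pM up.
  have pNM : p \in N :\: M by rewrite inE pM.
  have [_ /coveredP[q]] := st_new_edges st pNM.
  rewrite !inE => /andP[_ qM] qp2; apply/imsetP; exists p; first by rewrite inE pM.
  case/orP: up => /eqP // up; case/negP: uM.
  by apply: covered_incident qM _; rewrite up.
have colored := card_nbrs_colored_sym e_sym c_sym c_proper _ Oh.
have c3 : #|b3| <= size Y := colored Y.
have c4 : #|b4| <= #|N :\: M| by apply: leq_trans (colored _) _; rewrite size_map -cardE.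
have heavy_h : threshold i <= #|O|.
  by apply: heavy_end_options; apply: subsetP (promoted_mono jL) _ x0j.
have budget : #|N :\: M| <= B - i.+1.
  have := st_budget st; rewrite /potential (big_setD1 x0) //=; lia.
have [u uO] : exists2 u, u \in O & u \notin b1 :|: b2 :|: b3 :|: b4.
  apply/subsetPn/negP => /subset_leq_card small.
  have u12 : #|b1 :|: b2| <= #|b1| + #|b2| := leq_card_setU b1 b2.
  have u123 : #|b1 :|: b2 :|: b3| <= #|b1 :|: b2| + #|b3| := leq_card_setU _ b3.
  have u1234 : #|b1 :|: b2 :|: b3 :|: b4| <= #|b1 :|: b2 :|: b3| + #|b4| :=
    leq_card_setU _ b4.
  have := room i (leq_trans ij jL); lia.
rewrite !in_setU ![u \in [set _ in O | _]]in_set uO /= -has_colorE.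
by rewrite !negb_or => /andP[/andP[/andP[uX uN] uY] uc]; exists u.
Qed.

Variable u : T.
Hypothesis u_option : u \in options (promoted i) h.
Hypothesis uX : u \notin X.
Hypothesis uN : u \notin covered N.
Hypothesis uY : c u h \notin Y.
Hypothesis u_old : ~~ has_color (N :\: M) (c u h).

(* The new edge [(u, h)] replaces [x0]; the edge of [N] of the same colour,
   if any, is moved to the pending set. *)
Definition step_conflict := [set q in N | ecolor q == c u h].
Local Notation Q := step_conflict.

Let in_Q q : (q \in Q) = (q \in N) && (ecolor q == c u h).
Proof. by rewrite inE. Qed.
Definition step_matching := (u, h) |: (N :\: Q).
Definition step_pending := Q :|: (P :\ x0).

Let uM : (u, h) \notin M.
Proof.
case/optionsP: u_option => uM _ _; apply: contra uM => uhM.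
exact: covered_incident uhM (incident1 _).
Qed.

Let QN : Q \subset N. Proof. by apply/subsetP => q; rewrite in_Q => /andP[]. Qed.

Let Qi : Q \subset promoted i.
Proof.
apply/subsetP => q; rewrite in_Q => /andP[qN /eqP qc].
case/optionsP: u_option => _ _; apply: contraNT => qi.
apply/has_colorP; exists q => //; rewrite inE qi.
by apply: contraR u_old => qM; apply/has_colorP; exists q; rewrite // inE qM.
Qed.

Let QM : Q \subset M. Proof. exact: subset_trans Qi (promoted_sub i). Qed.

Let Q_le1 : #|Q| <= 1.
Proof.
apply/card_le1_eqP => q r; rewrite !in_Q => /andP[qN /eqP qc] /andP[rN /eqP rc].
by apply: (rainbow_color_inj (st_rainbow st) rN qN); rewrite qc rc.
Qed.

Let QP : [disjoint Q & P].
Proof. by rewrite disjoint_sym; apply: disjointWr QN (st_pending_out st). Qed.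

Lemma step_potential : potential step_pending < potential P.
Proof.
have Qpot : potential Q <= i.
  apply: (@leq_trans (\sum_(q in Q) i)); last first.
    by rewrite sum_nat_const -{2}[i]mul1n leq_mul ?Q_le1.
  apply: leq_sum => q qQ; apply: level_lt (subsetP Qi _ qQ); apply: leq_trans (ltnW ij) jL.
rewrite /potential (eq_bigl [predU Q & P :\ x0]) => [|p]; last by rewrite !inE.
rewrite bigU /=; last exact: disjointWr (subD1set P x0) QP.
by rewrite [X in _ < X](big_setD1 x0) //= ltn_add2r ltnS.
Qed.

Let resolved : x0 |: (M :\: (N :|: P)) \subset M :\: (step_matching :|: step_pending).
Proof.
apply/subsetP => q; rewrite in_setU1 => qx.
have qM : q \in M by case/orP: qx => [/eqP->//|]; rewrite inE => /andP[].
have qN : q \notin N by case/orP: qx => [/eqP->//|]; rewrite !inE negb_or => /andP[/andP[]].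
have qP : q \in P -> q == x0.
  by case/orP: qx => [->//|]; rewrite !inE negb_or => /andP[/andP[_ /negbTE->]].
have qu : q != (u, h) by apply: contraNneq uM => <-.
rewrite !inE qM (negbTE qN) (negbTE qu) /= andbT.
by apply/negP => /andP[/negP qx0 /qP].
Qed.

Lemma step_rainbow : rainbow step_matching.
Proof.
have [_ uh _] := optionsP _ _ _ u_option.
rewrite /step_matching; apply: rainbowU1 => //=.
- exact: (rainbow_subset (st_rainbow st) (subsetDl N Q)).
- by apply: contra uN; apply/subsetP/covered_subset/subsetDl.
- by apply: contra pending_heavy_end_free; apply/subsetP/covered_subset/subsetDl.
- apply/has_colorP => -[q]; rewrite in_setD in_Q => /andP[/negP qQ qN] qc.
  by apply: qQ; rewrite qN qc /=.
Qed.

Lemma step_card : #|step_matching| + #|step_pending| = #|M|.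
Proof.
have uhN : (u, h) \notin N :\: Q.
  by rewrite inE (negbTE (notin_covered (p := (u, h)) uN)) andbF.
rewrite /step_matching /step_pending cardsU1 uhN cardsDS // cardsU.
rewrite (disjoint_setI0 (disjointWr (subD1set P x0) QP)).
move: (st_card st) (subset_leq_card QN); rewrite cards0 subn0 (cardsD1 x0 P) x0P /=.
by move: #|N| #|Q| #|P :\ x0| #|M|; clear; lia.
Qed.

Lemma step_budget : #|step_matching :\: M| + potential step_pending <= B.
Proof.
have sub : step_matching :\: M \subset (u, h) |: (N :\: M).
  by apply/subsetP => p; rewrite !inE => /andP[pM /orP[->|/andP[_ ->]]]; rewrite ?pM ?orbT.
have le1 : #|(u, h) |: (N :\: M)| <= #|N :\: M|.+1 by rewrite cardsU1; case: (_ \notin _).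
have := subset_leq_card sub; have := step_potential; have := st_budget st; move: le1.
move: #|step_matching :\: M| #|(u, h) |: (N :\: M)| #|N :\: M|.
by move: (potential step_pending) (potential P); clear; lia.
Qed.

Lemma step_state : exchange_state X Y j B step_matching step_pending.
Proof.
case: st => _ _ pend pend_out new_edges removed avX avY _ ends.
have QNM : Q :|: (P :\ x0) \subset M.
  by rewrite subUset QM; apply: subset_trans (subD1set _ _) pending_in_M.
split; [exact: step_rainbow | exact: step_card | | | | | | | exact: step_budget | ];
  rewrite /step_matching /step_pending.
- rewrite subUset (subset_trans Qi) ?promoted_mono ?(ltnW ij) //.
  exact: subset_trans (subD1set _ _) pend.
- rewrite disjoints_subset; apply/subsetP => q qP.
  have qu : q != (u, h) by apply: contraNneq uM => <-; apply: subsetP QNM _ qP.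
  rewrite in_setC in_setU1 in_setD negb_or negb_and negbK qu /=.
  case/setUP: qP => [->//|/setD1P[_ qP]].
  by rewrite (disjointFr pend_out qP) orbT.
- move=> p; rewrite in_setD in_setU1 in_setD => /andP[pM /orP[/eqP->|/andP[_ pN]]].
    split; first by case/optionsP: u_option; rewrite in_setC.
    exact: (covered_incident (subsetP resolved _ (setU11 _ _)) (incident_heavy_end x0)).
  have pNM : p \in N :\: M by rewrite inE pM.
  have /subsetP sub := covered_subset (subset_trans (subsetU1 x0 _) resolved).
  by case: (new_edges p pNM) => -> /sub.
- apply/subsetP => q; rewrite in_setD in_setU1 in_setD negb_or negb_and negbK.
  case/andP => /andP[_ qQN] qM; case/orP: qQN => [/(subsetP Qi)|qN].
    exact: (subsetP (promoted_mono (ltnW ij))).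
  by apply: (subsetP removed); rewrite in_setD qN.
- rewrite disjoints_subset; apply/subsetP => x xX; rewrite in_setC coveredU1 negb_or.
  have xu : x != u by apply: contraNneq uX => <-.
  have xh : x != h by apply: contraNneq (ends _ x0P) => xh; rewrite -/h -xh.
  rewrite /incident /= negb_or xu xh /=.
  by apply: contraFN (disjointFr avX xX); apply/subsetP/covered_subset/subsetDl.
- move=> g gY; have ug : c u h != g by apply: contraNneq uY => ->.
  rewrite has_colorU1 negb_or /ecolor /= ug /=.
  by apply: contra (avY g gY); apply/has_color_subset/subsetDl.
- move=> p; rewrite !inE => /orP[/andP[pN _]|/andP[_ /ends//]].
  by rewrite (disjointFl avX (covered_incident pN (incident_heavy_end p))).
Qed.

End ExchangeStep.

Definition rematching (X : {set T}) (Y : seq K) j Mf :=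
  [/\ rainbow Mf, #|Mf| = #|M|, [disjoint X & covered Mf],
      (forall g, g \in Y -> ~~ has_color Mf g) & M :\: Mf \subset promoted j].

Lemma exchange (X : {set T}) (Y : seq K) j B N P : j <= L ->
  (forall i, i < L -> #|X| + size Y + 2 * (B - i.+1) < threshold i) ->
  exchange_state X Y j B N P -> exists Mf, rematching X Y j Mf.
Proof.
move=> jL room st; have [n Pn] := ubnP (potential P).
elim: n N P Pn st => // n IH N P Pn st.
have [P0|[x0 x0P]] := set_0Vmem P.
  exists N; case: st => rbN cardN _ _ _ removed avX avY _ _.
  by split => //; rewrite -cardN P0 cards0 addn0.
have [u [uO uX uN uY u_old]] := exchange_candidate jL st x0P room.
apply: (IH _ _ _ (step_state jL st x0P uO uX uN uY u_old)).
exact: (leq_trans (step_potential jL st x0P uO u_old) Pn).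
Qed.

Lemma rematch (X : {set T}) (Y : seq K) j P0 : j < L -> #|X| <= 2 -> size Y <= 2 ->
  P0 \subset promoted j -> #|P0| <= 2 ->
  [disjoint X & covered (M :\: P0)] -> (forall g, g \in Y -> ~~ has_color (M :\: P0) g) ->
  (forall p, p \in P0 -> heavy_end p \notin X) ->
  exists Mf, rematching X Y j Mf.
Proof.
move=> jL X2 Y2 P0j P02 avX avY ends.
have P0M : P0 \subset M := subset_trans P0j (promoted_sub j).
apply: (@exchange X Y j (2 * j) (M :\: P0) P0 (ltnW jL)).
  move=> i iL; rewrite /threshold; move: X2 Y2 jL iL L_ge2.
  by move: #|X| (size Y); clear; lia.
split => //.
- exact: (rainbow_subset rbM (subsetDl M P0)).
- by rewrite cardsDS // subnK // subset_leq_card.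
- by rewrite disjoints_subset; apply/subsetP => p pP; rewrite in_setC in_setD pP.
- by move=> p; rewrite !in_setD => /andP[/negP pM /andP[_ /pM]].
- apply/subsetP => p; rewrite !in_setD negb_and negbK => /andP[/orP[pP|/negP//] _].
  exact: (subsetP P0j).
- have -> : (M :\: P0) :\: M = set0.
    by apply/setP => p; rewrite !in_setD in_set0; case: (p \in M); rewrite ?andbF.
  rewrite cards0 add0n; apply: (@leq_trans (\sum_(p in P0) j)).
    by apply: leq_sum => p pP; apply: level_lt (ltnW jL) (subsetP P0j _ pP).
  by rewrite sum_nat_const leq_mul2r P02 orbT.
Qed.

Definition promoted_colored j g := [set r in promoted j | ecolor r == g].

Lemma promoted_colored_le1 j g : #|promoted_colored j g| <= 1.
Proof.
apply/card_le1_eqP => r s; rewrite !inE => /andP[rj /eqP rg] /andP[sj /eqP sg].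
have sub := subsetP (promoted_sub j).
by apply: (rainbow_color_inj rbM (sub _ sj) (sub _ rj)); rewrite rg sg.
Qed.

Lemma free_color_after_removal j g P0 : ~~ has_color (M :\: promoted j) g ->
  promoted_colored j g \subset P0 -> ~~ has_color (M :\: P0) g.
Proof.
move=> free sub; apply/has_colorP => -[p]; rewrite in_setD => /andP[pP pM] pg.
have pj : p \in promoted j.
  by apply: contraNT free => pj; apply/has_colorP; exists p; rewrite // in_setD pj.
by move: pP; rewrite (subsetP sub) // inE pj pg eqxx.
Qed.

Lemma heavy_end_neq_uncovered u p : u \in uncovered -> p \in M -> heavy_end p != u.
Proof. by rewrite in_setC => uM pM; apply: contraNneq uM => <-; apply: heavy_end_covered. Qed.

Lemma rematch_option j u w : j < L -> u \in options (promoted j) w ->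
  w \in uncovered \/ (exists2 q, q \in promoted j & w = other_end q) ->
  exists Mf, rematching [set u; w] [:: c u w] j Mf.
Proof.
move=> jL uO hw; have [uM uw free] := optionsP _ _ _ uO.
have uU : u \in uncovered by rewrite in_setC.
have sub := subsetP (promoted_sub j).
pose W := [set q in promoted j | w == other_end q].
pose P0 := W :|: promoted_colored j (c u w).
have W_le1 : #|W| <= 1.
  apply/card_le1_eqP => q r; rewrite !inE => /andP[qj /eqP qw] /andP[rj /eqP rw].
  apply: (rainbow_incident_inj rbM (sub _ rj) (sub _ qj) (x := w)).
    by rewrite rw incident_other_end.
  by rewrite qw incident_other_end.
have P0j : P0 \subset promoted j.
  by rewrite subUset; apply/andP; split; apply/subsetP => q; rewrite inE => /andP[].
have P0M := subsetP (subset_trans P0j (promoted_sub j)).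
have w_in_P0 p : p \in M -> incident w p -> p \in P0.
  move=> pM wp; case: hw => [|[q qj wq]]; first by rewrite in_setC (covered_incident pM wp).
  have -> : p = q.
    by apply: (rainbow_incident_inj rbM pM (sub _ qj) wp); rewrite wq incident_other_end.
  by rewrite in_setU inE qj wq eqxx.
apply: (@rematch _ _ j P0) => //; first by rewrite cards2; case: (_ != _).
- apply: leq_trans (leq_card_setU _ _) _.
  exact: (leq_add W_le1 (promoted_colored_le1 j _)).
- rewrite disjoints_subset; apply/subsetP => x; rewrite in_set2 in_setC => /orP[]/eqP->.
    by apply: contra uM; apply: (subsetP (covered_subset (subsetDl M P0))).
  apply/coveredP => -[p]; rewrite in_setD => /andP[/negP pP pM] wp.
  exact/pP/w_in_P0.
- by move=> g; rewrite inE => /eqP->; apply: free_color_after_removal free (subsetUr _ _).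
- move=> p /P0M pM; rewrite in_set2 negb_or (heavy_end_neq_uncovered uU pM) /=.
  case: hw => [wU|[q qj wq]]; first exact: (heavy_end_neq_uncovered wU pM).
  apply/eqP => pw; have qM := sub _ qj.
  have pq : p = q.
    apply: (rainbow_incident_inj rbM pM qM (x := w)); first by rewrite -pw incident_heavy_end.
    by rewrite wq incident_other_end.
  by move: (heavy_end_neq_other_end qM); rewrite -pq pw wq pq eqxx.
Qed.

Lemma no_augmenting_option j u w : j < L -> u \in options (promoted j) w ->
  w \in uncovered \/ (exists2 q, q \in promoted j & w = other_end q) -> False.
Proof.
move=> jL uO hw; have [_ uw _] := optionsP _ _ _ uO.
have [Mf [rbMf cardMf avX avY _]] := rematch_option jL uO hw.
have uMf : u \notin covered Mf by rewrite (disjointFr avX) // !inE eqxx.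
have wMf : w \notin covered Mf by rewrite (disjointFr avX) // !inE eqxx orbT.
have [S rbS cardS] := rainbow_extend rbMf uw uMf wMf (avY _ (mem_head _ _)).
by have := maxM rbS; rewrite cardS cardMf ltnn.
Qed.

Lemma rematch_uncovered j u v g1 g2 : j < L -> u \in uncovered -> v \in uncovered ->
  ~~ has_color (M :\: promoted j) g1 -> ~~ has_color (M :\: promoted j) g2 ->
  exists Mf, rematching [set u; v] [:: g1; g2] j Mf.
Proof.
move=> jL uU vU free1 free2.
pose P0 := promoted_colored j g1 :|: promoted_colored j g2.
have P0j : P0 \subset promoted j.
  by rewrite subUset; apply/andP; split; apply/subsetP => r; rewrite inE => /andP[].
apply: (@rematch _ _ j P0) => //; first by rewrite cards2; case: (_ != _).
- apply: leq_trans (leq_card_setU _ _) _.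
  exact: (leq_add (promoted_colored_le1 j _) (promoted_colored_le1 j _)).
- rewrite disjoints_subset; apply/subsetP => z; rewrite in_set2 in_setC.
  have /subsetP sub := covered_subset (subsetDl M P0).
  by case/orP => /eqP->; [move: uU | move: vU]; rewrite in_setC; apply: contra; apply: sub.
- move=> g; rewrite !inE => /orP[]/eqP->.
    exact: free_color_after_removal free1 (subsetUl _ _).
  exact: free_color_after_removal free2 (subsetUr _ _).
- move=> p pP; have pM := subsetP (subset_trans P0j (promoted_sub j)) _ pP.
  by rewrite in_set2 negb_or !heavy_end_neq_uncovered.
Qed.

Lemma option_avoiding j x v g : 3 <= #|options (promoted j) x| ->
  exists2 u, u \in options (promoted j) x & (u != v) && (c u x != g).
Proof.
set O := options (promoted j) x => xO.
have Ox z : z \in O -> e z x by case/optionsP.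
pose bad := [set z in O | z == v] :|: [set z in O | c z x \in [:: g]].
have bad2 : #|bad| <= 2.
  apply: leq_trans (leq_card_setU _ _) _.
  have b1 : #|[set z in O | z == v]| <= 1.
    rewrite -(cards1 v); apply: subset_leq_card.
    by apply/subsetP => z; rewrite !inE => /andP[_ ->].
  exact: (leq_add b1 (card_nbrs_colored_sym e_sym c_sym c_proper [:: g] Ox)).
have [u uO] : exists2 u, u \in O & u \notin bad.
  apply/subsetPn/negP => /subset_leq_card Obad.
  by move: xO bad2 Obad; move: #|O| #|bad|; clear; lia.
rewrite in_setU ![u \in [set _ in O | _]]in_set uO /= negb_or inE => ub.
by exists u.
Qed.

Lemma options_opposite_empty j q x y : j < L -> q \in M -> q \notin promoted j ->
  (x, y) = q \/ (y, x) = q -> 3 <= #|options (promoted j) x| ->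
  #|options (promoted j) y| = 0.
Proof.
move=> jL qM qj xyq xO; apply/eqP; rewrite -leqn0 leqNgt; apply/negP => /card_gt0P[v vO].
have [exy xq yq] : [/\ e x y, incident x q & incident y q].
  move: (rainbow_edge rbM qM); case: xyq => <- /= exy.
    by split; rewrite /incident /= ?eqxx ?orbT.
  by split; rewrite /incident /= ?eqxx ?orbT // e_sym.
have xy : x != y by apply: contraTneq exy => ->; rewrite e_irr.
have [vM vy free_v] := optionsP _ _ _ vO.
have [u uO /andP[uv uc]] := option_avoiding v (c v y) xO.
have [uM ux free_u] := optionsP _ _ _ uO.
have uU : u \in uncovered by rewrite in_setC.
have vU : v \in uncovered by rewrite in_setC.
have [Mf [rbMf cardMf avX avY removed]] := rematch_uncovered jL uU vU free_u free_v.
have qMf : q \in Mf.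
  by apply: contraNT qj => qMf; apply: (subsetP removed); rewrite in_setD qM qMf.
have uMf : u \notin covered Mf by rewrite (disjointFr avX) // !inE eqxx.
have vMf : v \notin covered Mf by rewrite (disjointFr avX) // !inE eqxx orbT.
have [S rbS cardS] := rainbow_extend_split rbMf qMf xq yq xy ux vy uv uMf vMf uc
  (avY _ (mem_head _ _)) (avY _ (mem_last _ _)).
by have := maxM rbS; rewrite cardS cardMf ltnn.
Qed.

Lemma card_uncovered : #|uncovered| = #|T| - 2 * #|M|.
Proof. by rewrite cardsCs setCK (card_covered rbM e_irr). Qed.

Lemma options_le_uncovered P x : #|options P x| <= #|uncovered|.
Proof. by apply: subset_leq_card; apply/subsetP => u; rewrite inE => /andP[]. Qed.

Lemma options_pair_le j q : j < L -> q \in M :\: promoted j ->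
  #|options (promoted j) q.1| + #|options (promoted j) q.2| <=
  (q \in promoted j.+1) * #|uncovered| + (threshold j - 1).
Proof.
move=> jL; rewrite in_setD => /andP[qj qM].
have qE : (q.1, q.2) = q by case: q {qj qM}.
have B1 := options_opposite_empty jL qM qj (or_introl qE).
have B2 := options_opposite_empty jL qM qj (or_intror qE).
have t5 : 5 <= threshold j by rewrite /threshold; move: jL L_ge2; clear; lia.
have U1 := options_le_uncovered (promoted j) q.1.
have U2 := options_le_uncovered (promoted j) q.2.
case: (boolP (q \in promoted j.+1)) => qj1 /=.
  have [_ /orP heavy_q] := promoted_heavy qj qj1; rewrite mul1n.
  move: B1 B2 U1 U2 heavy_q t5.
  move: #|options _ q.1| #|options _ q.2| (threshold j) #|uncovered|; clear.
  move=> a b t n B1 B2 U1 U2 [ta|tb] t5.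
    by rewrite B1; lia.
  by rewrite B2; lia.
have light : ~~ heavy j (promoted j) q.
  by apply: contra qj1 => hq /=; rewrite in_setU inE in_setD qj qM hq orbT.
move: light; rewrite /heavy negb_or -!ltnNge mul0n => /andP.
move: B1 B2 t5; move: #|options _ q.1| #|options _ q.2| (threshold j); clear.
move=> a b t B1 B2 t5 [ta tb]; case: (leqP 3 a) => [/B1->|a2]; first lia.
by case: (leqP 3 b) => [/B2->|b2]; lia.
Qed.

Variable d : nat.
Hypothesis deg_ge : forall x, d <= #|[set y | e x y]|.

Definition good_nbrs j u :=
  [set z in covered (M :\: promoted j) | e u z & ~~ has_color (M :\: promoted j) (c u z)].

Lemma good_nbrs_large j u : j < L -> u \in uncovered -> d - #|M| <= #|good_nbrs j u|.
Proof.
move=> jL uU; set Q := M :\: promoted j.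
pose Nu := [set z | e u z].
pose A1 := [set z in Nu | c u z \in [seq ecolor p | p <- enum Q]].
pose A3 := [set z in Nu | ~~ has_color Q (c u z) & z \notin covered Q].
have cover : Nu \subset A1 :|: good_nbrs j u :|: A3.
  apply/subsetP => z zN; have uz : e u z by rewrite inE in zN.
  rewrite !in_setU ![z \in [set _ in _ | _]]in_set zN uz /= -/Q -has_colorE.
  by case: (has_color Q _); case: (z \in covered Q).
have c1 : #|A1| <= #|Q|.
  have Nu_u z : z \in Nu -> e u z by rewrite inE.
  have := card_nbrs_colored c_proper [seq ecolor p | p <- enum Q] Nu_u.
  by rewrite size_map -cardE.
have c3 : #|A3| <= #|promoted j|.
  apply: leq_trans (leq_imset_card heavy_end (promoted j)); apply: subset_leq_card.
  apply/subsetP => z; rewrite in_set => /andP[zN /andP[free zQ]].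
  have uz : e u z by rewrite inE in zN.
  have uO : u \in options (promoted j) z by apply/optionsP; split; rewrite // -in_setC.
  have /coveredP[p pM zp] : z \in covered M.
    apply/negPn/negP => zU; apply: (no_augmenting_option jL uO).
    by left; rewrite in_setC.
  have pj : p \in promoted j.
    by apply: contraNT zQ => pj; apply: (covered_incident (S := Q) _ zp); rewrite in_setD pj pM.
  apply/imsetP; exists p => //; case: (incident_ends zp) => // zt; exfalso.
  by apply: (no_augmenting_option jL uO); right; exists p.
have cQ : #|Q| + #|promoted j| = #|M| by rewrite cardsDS ?subnK ?subset_leq_card ?promoted_sub.
have dN : d <= #|Nu| := deg_ge u.
have u1 : #|A1 :|: good_nbrs j u| <= #|A1| + #|good_nbrs j u| := leq_card_setU _ _.
have u2 : #|A1 :|: good_nbrs j u :|: A3| <= #|A1 :|: good_nbrs j u| + #|A3| :=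
  leq_card_setU _ _.
move: dN u1 u2 (subset_leq_card cover) c1 c3 cQ.
move: #|Nu| #|A1 :|: good_nbrs j u :|: A3| #|A1 :|: good_nbrs j u|.
move: #|A1| #|good_nbrs j u| #|A3| #|Q| #|promoted j| #|M|; clear; lia.
Qed.

Lemma sum_good_nbrs j :
  \sum_(u in uncovered) #|good_nbrs j u| =
  \sum_(z in covered (M :\: promoted j)) #|options (promoted j) z|.
Proof.
under eq_bigr do rewrite card_in_set_sum.
by rewrite exchange_big; apply: eq_bigr => z _; rewrite card_in_set_sum.
Qed.

Lemma level_count j : j < L ->
  #|uncovered| * (d - #|M|) <=
  #|uncovered| * #|promoted j.+1 :\: promoted j| + (threshold j - 1) * #|M|.
Proof.
move=> jL; pose Q := M :\: promoted j.
have lower : #|uncovered| * (d - #|M|) <= \sum_(q in M :\: promoted j) (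
    #|options (promoted j) q.1| + #|options (promoted j) q.2|).
  rewrite -(sum_covered (rainbow_subset rbM (subsetDl M _)) e_irr (fun z => #|options _ z|)).
  rewrite -sum_good_nbrs.
  by rewrite -sum_nat_const; apply: leq_sum => u uU; apply: good_nbrs_large.
have upper : \sum_(q in Q) (#|options (promoted j) q.1| + #|options (promoted j) q.2|) <=
    \sum_(q in Q) ((q \in promoted j.+1) * #|uncovered| + (threshold j - 1)).
  by apply: leq_sum => q; apply: options_pair_le.
have promotedE : \sum_(q in Q) ((q \in promoted j.+1) * #|uncovered| + (threshold j - 1)) =
    #|promoted j.+1 :\: promoted j| * #|uncovered| + #|Q| * (threshold j - 1).
  rewrite big_split /= sum_nat_const -big_distrl /= -card_in_set_sum; congr (_ * _ + _).
  apply: eq_card => q; rewrite !inE.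
  by case: (q \in promoted j); case: (q \in M); case: (heavy j (promoted j) q).
have QM : #|Q| <= #|M| by apply: subset_leq_card; apply: subsetDl.
move: (leq_trans lower upper); rewrite promotedE; move: QM.
move: (d - #|M|) #|promoted j.+1 :\: promoted j| #|uncovered| #|Q| #|M| (threshold j - 1).
clear; nia.
Qed.

Lemma levels_count :
  #|uncovered| * (L * (d - #|M|)) <= #|uncovered| * #|M| + #|M| * (3 * L * L - L).
Proof.
suff H n : n <= L -> #|uncovered| * (n * (d - #|M|)) <=
    #|uncovered| * #|promoted n| + #|M| * (4 * L * n - n * n - n).
  have := H L (leqnn L); have := subset_leq_card (promoted_sub L).
  by move: #|uncovered| #|promoted L| #|M| (d - #|M|) L_ge2; clear; nia.
elim: n => [|n IH] nL; first by rewrite /= cards0; nia.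
have := level_count nL; have := IH (ltnW nL).
have -> : #|promoted n.+1| = #|promoted n| + #|promoted n.+1 :\: promoted n|.
  by rewrite cardsDS ?subnKC ?subset_leq_card ?promoted_mono.
move: nL L_ge2; rewrite /threshold.
move: #|uncovered| #|promoted n| #|promoted n.+1 :\: promoted n| #|M| (d - #|M|); clear; nia.
Qed.

End MaximumRainbowMatching.

Lemma rainbow_matching_enum (T : finType) (e : rel T) (K : eqType) (c : T -> T -> K)
    (S : {set T * T}) :
  irreflexive e -> rainbow e c S -> rainbow_matching e c (enum S).
Proof.
move=> e_irr rbS; split; [split|].
- by apply/allP => p; rewrite mem_enum => pS; apply: (rainbow_edge rbS pS).
- have : {subset enum S <= S} by move=> p; rewrite mem_enum.
  elim: (enum S) (enum_uniq (mem S)) => //= p s IH /andP[ps us] sub.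
  have pS : p \in S by apply: sub; rewrite inE eqxx.
  have fresh x : incident x p -> x \notin flatten [seq [:: q.1; q.2] | q <- s].
    move=> xp; apply/negP => /flatten_mapP[q qs xq].
    have qS : q \in S by apply: sub; rewrite inE qs orbT.
    have xq' : incident x q by move: xq; rewrite !inE.
    by move: ps; rewrite -(rainbow_incident_inj rbS qS pS xq' xp) qs.
  rewrite IH // => [|q qs]; last by apply: sub; rewrite inE qs orbT.
  rewrite inE negb_or (fresh _ (incident1 p)) (fresh _ (incident2 p)) !andbT.
  by apply: contraTneq (rainbow_edge rbS pS) => ->; rewrite e_irr.
- rewrite map_inj_in_uniq ?enum_uniq // => p q; rewrite !mem_enum => pS qS.
  exact: (rainbow_color_inj rbS pS qS).
Qed.

Lemma mindeg_le (T : finType) (e : rel T) x : mindeg e <= deg e x.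
Proof. by have := @Order.TotalTheory.bigmin_le _ nat T #|T| x (deg e); rewrite minEnat. Qed.

Lemma floor_sqrt s : exists L, L * L <= s < L.+1 * L.+1.
Proof.
elim: s => [|s [L /andP[lo hi]]]; first by exists 0.
case: (ltnP s.+1 (L.+1 * L.+1)) => hs; first by exists L; rewrite hs andbT ltnW.
by exists L.+1; rewrite hs /=; lia.
Qed.

Lemma gap_ineq_large s k L : 5 <= L -> 8 * (k * k) < s * s * s ->
  L * L <= s -> s < L.+1 * L.+1 -> k * (3 * L * L - L + 2 * s) < 2 * L * (s * s).
Proof.
move=> L5 ks Ls sL; set A := 3 * L * L - L + 2 * s.
have A2 : A * A <= 32 * L * L * s.
  have : A <= 5 * L * L + 3 * L by rewrite /A; nia.
  have : (5 * L + 3) * (5 * L + 3) <= 32 * L * L by nia.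
  nia.
rewrite ltnNge; apply/negP => kA.
have : 4 * (L * L) * (s * s * s * s) <= k * k * (A * A) by nia.
have A0 : 0 < A by rewrite /A; nia.
have : 8 * (k * k) * (A * A) < s * s * s * (A * A) by nia.
nia.
Qed.

Lemma gap_ineq_small s k L : 3 <= L <= 4 -> 8 * ((k + s) * (k + s)) < s * s * s ->
  L * L <= s -> s < L.+1 * L.+1 -> k * (3 * L * L - L + 2 * s) < 2 * L * (s * s).
Proof.
case/andP => L3 L4; have [->|->] : L = 3 \/ L = 4 by lia.
  move=> ks Ls sL; have k12 : k <= 12 by nia.
  nia.
move=> ks Ls sL; have k41 : k <= 41 by nia.
nia.
Qed.

Lemma cube_gap_ge9 s k : 8 * ((k + s) * (k + s)) < s * s * s -> 9 <= s.
Proof.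
move=> ks; rewrite leqNgt; apply/negP => s8.
have : 8 * (s * s) <= 8 * ((k + s) * (k + s)) by nia.
nia.
Qed.

Lemma gap_ineq s k L : 8 * ((k + s) * (k + s)) < s * s * s ->
  L * L <= s -> s < L.+1 * L.+1 -> k * (3 * L * L - L + 2 * s) < 2 * L * (s * s).
Proof.
move=> ks Ls sL; have s9 := cube_gap_ge9 ks.
case: (leqP 5 L) => L5; first by apply: gap_ineq_large => //; nia.
by apply: gap_ineq_small => //; apply/andP; split; nia.
Qed.

Lemma cube_gap_count_absurd s k L u : 8 * ((k + s) * (k + s)) < s * s * s ->
  L * L <= s -> s < L.+1 * L.+1 -> 2 * s <= u ->
  u * (L * s) <= u * k + k * (3 * L * L - L) -> False.
Proof.
move=> ks Ls sL su count.
have gap := gap_ineq ks Ls sL.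
have s9 := cube_gap_ge9 ks.
have kLs : k <= L * s.
  rewrite leqNgt; apply/negP => Lsk.
  have : L * s * (L * s) < k * k by apply: ltn_mul.
  have : s * s * s <= 8 * (L * L) * (s * s).
    by rewrite [s * s * s]mulnC leq_mul //; move: sL Ls; clear; nia.
  nia.
have e1 : u * (L * s - k) <= k * (3 * L * L - L).
  by rewrite mulnBr; move: count; move: (u * (L * s)) (u * k) (k * _); clear; lia.
have e2 : 2 * s * (L * s - k) <= u * (L * s - k) by apply: leq_mul.
have e3 : 2 * s * (L * s - k) + k * (2 * s) = 2 * L * (s * s).
  by rewrite [k * _]mulnC -mulnDr subnK //; clear; nia.
rewrite mulnDr in gap.
move: gap e1 e2 e3; move: (k * _) (2 * s * _) (u * _) (k * (2 * s)) (2 * L * _).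
clear; lia.
Qed.

Import Order.TTheory GRing.Theory Num.Theory.
Local Open Scope ring_scope.

Lemma real_gap_cube (R : realType) (d k : nat) :
  (k%:R : R) < d%:R - 2 * (d%:R `^ (2 / 3 : R)) ->
  (k < d)%N /\ (8 * ((k + (d - k)) * (k + (d - k))) < (d - k) * (d - k) * (d - k))%N.
Proof.
set x : R := d%:R; set a : R := x `^ (2 / 3) => H.
have a0 : 0 <= a by apply: powR_ge0.
have a3 : a ^+ 3 = x ^+ 2.
  by rewrite -powR_mulrn ?ler0n // /a -powRrM -powR_mulrn ?ler0n // divfK ?pnatr_eq0.
have kd : (k < d)%N.
  by rewrite -(ltr_nat R); apply: lt_le_trans H _; rewrite lerBlDr lerDl mulr_ge0.
split => //; rewrite subnKC ?(ltnW kd) // -(ltr_nat R).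
have -> : ((8 * (d * d))%:R : R) = (2 * a) ^+ 3 by rewrite exprMn a3 -!natrX -natrM.
have -> : (((d - k) * (d - k) * (d - k))%:R : R) = (x - k%:R) ^+ 3.
  by rewrite -natrB ?(ltnW kd) // -natrX !expnS expn0 muln1 mulnA.
by rewrite ltrXn2r ?mulr_ge0 ?subr_ge0 ?ler_nat ?(ltnW kd) // ltrBrDr addrC -ltrBrDr.
Qed.

Theorem mainTheorem2 (R : realType) (T : finType) (e : rel T) (K : eqType)
    (c : T -> T -> K) :
  symmetric e -> irreflexive e -> proper_edge_coloring e c ->
  (2 * mindeg e <= #|T|)%N ->
  exists M : seq (T * T), rainbow_matching e c M /\
    (mindeg e)%:R - 2 * ((mindeg e)%:R `^ (2 / 3 : R)) <= (size M)%:R.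
Proof.
move=> e_sym e_irr [c_sym c_proper] n_ge.
have [M rbM maxM] := arg_maxnP (fun S : {set T * T} => #|S|) (rainbow0 e c).
case: (lerP ((mindeg e)%:R - 2 * ((mindeg e)%:R `^ (2 / 3 : R))) #|M|%:R) => [large|small].
  by exists (enum M); split; [apply: rainbow_matching_enum | rewrite -cardE].
have [kd cube] := real_gap_cube small; exfalso.
have [L /andP[Ls sL]] := floor_sqrt (mindeg e - #|M|).
have L2 : (2 <= L)%N by have := cube_gap_ge9 cube; move: sL; clear; nia.
have count := levels_count e_sym e_irr c_sym c_proper rbM maxM L2 (@mindeg_le T e).
have room : (2 * (mindeg e - #|M|) <= #|uncovered M|)%N.
  by rewrite (card_uncovered e_irr rbM); move: n_ge kd; clear; lia.
exact: (cube_gap_count_absurd cube Ls sL room count).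
Qed.
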